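(* Let $\mathsf{L}\in\{\mathsf{CN4K},\mathsf{CN4K}^\pm,\mathsf{CN4K}^\curlyvee,\mathsf{CN4K}^{\Join},\mathsf{CN4K}^1\}$ and $\phi,\chi\in\mathcal{L}$. Then (disjunction property) $\mathsf{L}\models\phi\vee\chi$ iff $\mathsf{L}\models\phi$ or $\mathsf{L}\models\chi$; and (constructive falsity) $\mathsf{L}\models{\sim}(\phi\wedge\chi)$ iff $\mathsf{L}\models{\sim}\phi$ or $\mathsf{L}\models{\sim}\chi$.
   Context: Fix a countable set $\mathsf{Prop}$ of propositional variables. The language $\mathcal{L}$ is given by the grammar $\phi::=p\mid{\sim}\phi\mid(\phi\wedge\phi)\mid(\phi\vee\phi)\mid(\phi\to\phi)\mid\Box\phi\mid\Diamond\phi$ with $p\in\mathsf{Prop}$. A $\mathsf{CN4K}$ frame is a tuple $\mathfrak{F}=\langle W,\le,R^+_\Box,R^-_\Box,R^+_\Diamond,R^-_\Diamond\rangle$ where $W\neq\varnothing$, $\le$ is a preorder on $W$, and $R^+_\Box,R^-_\Box,R^+_\Diamond,R^-_\Diamond$ are arbitrary binary relations on $W$. $R(w)=\{w'\mid wRw'\}$. The frame is $\pm$-birelational if $R^+_\Box=R^+_\Diamond$ and $R^-_\Box=R^-_\Diamond$; $\curlyvee$-birelational if $R^+_\Box=R^-_\Box$ and $R^+_\Diamond=R^-_\Diamond$; $\Join$-birelational if $R^+_\Box=R^-_\Diamond$ and $R^+_\Diamond=R^-_\Box$; monorelational if all four relations coincide. A $\mathsf{CN4K}$ model is $\mathfrak{M}=\langle\mathfrak{F},v^+,v^-\rangle$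 with $v^+,v^-:\mathsf{Prop}\to2^W$ upward closed under $\le$. Support: $w\Vdash^\pm p$ iff $w\in v^\pm(p)$; $w\Vdash^+{\sim}\phi$ iff $w\Vdash^-\phi$; $w\Vdash^-{\sim}\phi$ iff $w\Vdash^+\phi$; $w\Vdash^+\phi\wedge\chi$ iff both; $w\Vdash^-\phi\wedge\chi$ iff $w\Vdash^-\phi$ or $w\Vdash^-\chi$; $w\Vdash^+\phi\vee\chi$ iff $w\Vdash^+\phi$ or $w\Vdash^+\chi$; $w\Vdash^-\phi\vee\chi$ iff both negatively supported; $w\Vdash^+\phi\to\chi$ iff for all $w'\ge w$, $w'\Vdash^+\phi$ implies $w'\Vdash^+\chi$; $w\Vdash^-\phi\to\chi$ iff $w\Vdash^+\phi$ and $w\Vdash^-\chi$; $w\Vdash^+\Box\phi$ iff $\forall w'\ge w\ \forall w''\in R^+_\Box(w')$: $w''\Vdash^+\phi$; $w\Vdash^-\Box\phi$ iff $\forall w'\ge w\ \exists w''\in R^-_\Box(w')$: $w''\Vdash^-\phi$; $w\Vdash^+\Diamond\phi$ iff $\forall w'\ge w\ \exists w''\in R^+_\Diamond(w')$: $w''\Vdash^+\phi$; $w\Vdash^-\Diamond\phi$ iff $\forall w'\ge w\ \forall w''\in R^-_\Diamond(w')$: $w''\Vdash^-\phi$. $\mathsf{CN4K}$, $\mathsf{CN4K}^\pm$, $\mathsf{CN4K}^\curlyvee$, $\mathsf{CN4K}^{\Join}$, $\mathsf{CN4K}^1$ are the logics of, respectively, all frames, $\pm$-birelational, $\curlyvee$-birelational,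 $\Join$-birelational, and monorelational frames; $\mathsf{L}\models\chi$ means $\mathfrak{M},w\Vdash^+\chi$ for every model $\mathfrak{M}$ on a frame of the class of $\mathsf{L}$ and every state $w$ of $\mathfrak{M}$. *)

From Stdlib Require Import Relations.

Definition Prop_var := nat.

Inductive form : Type :=
| Var : Prop_var -> form
| Neg : form -> form
| And : form -> form -> form
| Or  : form -> form -> form
| Imp : form -> form -> form
| Box : form -> form
| Dia : form -> form.

Record frame : Type := {
  W : Type;
  W_nonempty : inhabited W;
  le : W -> W -> Prop;
  le_preorder : preorder W le;
  RBp : W -> W -> Prop;
  RBm : W -> W -> Prop;
  RDp : W -> W -> Prop;
  RDm : W -> W -> Prop
}.

Record model : Type := {
  mframe : frame;
  vpos : Prop_var -> W mframe -> Prop;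
  vneg : Prop_var -> W mframe -> Prop;
  vpos_up : forall p w w', le mframe w w' -> vpos p w -> vpos p w';
  vneg_up : forall p w w', le mframe w w' -> vneg p w -> vneg p w'
}.

(* supp M true phi w  :  w ||-^+ phi ;  supp M false phi w  :  w ||-^- phi *)
Fixpoint supp (M : model) (pol : bool) (phi : form) (w : W (mframe M)) : Prop :=
  let F := mframe M in
  match phi with
  | Var p => if pol then vpos M p w else vneg M p w
  | Neg a => supp M (negb pol) a w
  | And a b => if pol then supp M true a w /\ supp M true b w
               else supp M false a w \/ supp M false b w
  | Or a b => if pol then supp M true a w \/ supp M true b w
              else supp M false a w /\ supp M false b w
  | Imp a b => if pol then
                 forall w', le F w w' -> supp M true a w' -> supp M true b w'
               else supp M true a w /\ supp M false b w
  | Box a => if pol then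
               forall w', le F w w' -> forall w'', RBp F w' w'' -> supp M true a w''
             else
               forall w', le F w w' -> exists w'', RBm F w' w'' /\ supp M false a w''
  | Dia a => if pol then
               forall w', le F w w' -> exists w'', RDp F w' w'' /\ supp M true a w''
             else
               forall w', le F w w' -> forall w'', RDm F w' w'' -> supp M false a w''
  end.

Inductive logic : Type := CN4K | CN4Kpm | CN4Kvee | CN4Kjoin | CN4K1.

Definition same_rel {W : Type} (R S : W -> W -> Prop) : Prop :=
  forall x y, R x y <-> S x y.

Definition in_class (L : logic) (F : frame) : Prop :=
  match L with
  | CN4K => True
  | CN4Kpm => same_rel (RBp F) (RDp F) /\ same_rel (RBm F) (RDm F)
  | CN4Kvee => same_rel (RBp F) (RBm F) /\ same_rel (RDp F) (RDm F)
  | CN4Kjoin => same_rel (RBp F) (RDm F) /\ same_rel (RDp F) (RBm F)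
  | CN4K1 => same_rel (RBp F) (RBm F) /\ same_rel (RBp F) (RDp F)
             /\ same_rel (RBp F) (RDm F)
  end.

Definition valid (L : logic) (chi : form) : Prop :=
  forall M : model, in_class L (mframe M) -> forall w, supp M true chi w.

(* If [phi] fails at [w1] in M1 and [chi] fails at [w2] in M2 (for either polarity),
   put the disjoint union of M1 and M2 above a fresh root that is below every state,
   has no modal successors and satisfies no atom.  The identities of relations that
   define each frame class survive the gluing.  Support is invariant under bounded
   morphisms, and both copies embed as bounded morphisms; so if the root supported
   [phi] or [chi], persistence would transport it to [w1] or [w2]. *)
From Stdlib Require Import Relations Classical.

Definition bounded_morphism {A B : Type} (R : A -> A -> Prop) (S : B -> B -> Prop)
  (f : A -> B) : Prop :=
  (forall x y, R x y -> S (f x) (f y)) /\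
  (forall x z, S (f x) z -> exists y, R x y /\ f y = z).

Lemma bounded_morphism_forall {A B : Type} (R : A -> A -> Prop) (S : B -> B -> Prop)
  (f : A -> B) (P : B -> Prop) (Q : A -> Prop) (x : A) :
  bounded_morphism R S f -> (forall y, P (f y) <-> Q y) ->
  (forall z, S (f x) z -> P z) <-> (forall y, R x y -> Q y).
Proof.
  intros [forth back] HPQ; split.
  - intros H y Hxy. apply HPQ, H, forth, Hxy.
  - intros H z Hz. destruct (back x z Hz) as [y [Hxy <-]]. apply HPQ, H, Hxy.
Qed.

Lemma bounded_morphism_exists {A B : Type} (R : A -> A -> Prop) (S : B -> B -> Prop)
  (f : A -> B) (P : B -> Prop) (Q : A -> Prop) (x : A) :
  bounded_morphism R S f -> (forall y, P (f y) <-> Q y) ->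
  (exists z, S (f x) z /\ P z) <-> (exists y, R x y /\ Q y).
Proof.
  intros [forth back] HPQ; split.
  - intros [z [Hz HP]]. destruct (back x z Hz) as [y [Hxy <-]].
    exists y. split; [exact Hxy | apply HPQ, HP].
  - intros [y [Hxy HQ]]. exists (f y). split; [apply forth, Hxy | apply HPQ, HQ].
Qed.

Record model_morphism (M1 M2 : model) (f : W (mframe M1) -> W (mframe M2)) : Prop := {
  mm_le : bounded_morphism (le _) (le _) f;
  mm_RBp : bounded_morphism (RBp _) (RBp _) f;
  mm_RBm : bounded_morphism (RBm _) (RBm _) f;
  mm_RDp : bounded_morphism (RDp _) (RDp _) f;
  mm_RDm : bounded_morphism (RDm _) (RDm _) f;
  mm_vpos : forall p x, vpos M2 p (f x) <-> vpos M1 p x;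
  mm_vneg : forall p x, vneg M2 p (f x) <-> vneg M1 p x
}.

Lemma supp_model_morphism (M1 M2 : model) (f : W (mframe M1) -> W (mframe M2)) :
  model_morphism M1 M2 f ->
  forall a pol x, supp M2 pol a (f x) <-> supp M1 pol a x.
Proof.
  intros Hf a.
  induction a as [p|a IHa|a1 IHa1 a2 IHa2|a1 IHa1 a2 IHa2|a1 IHa1 a2 IHa2|a IHa|a IHa];
    intros pol x; destruct pol; cbn [supp negb].
  - apply (mm_vpos _ _ _ Hf).
  - apply (mm_vneg _ _ _ Hf).
  - apply IHa.
  - apply IHa.
  - rewrite IHa1, IHa2. tauto.
  - rewrite IHa1, IHa2. tauto.
  - rewrite IHa1, IHa2. tauto.
  - rewrite IHa1, IHa2. tauto.
  - apply (bounded_morphism_forall _ _ _ _ _ _ (mm_le _ _ _ Hf)).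
    intros y. rewrite IHa1, IHa2. tauto.
  - rewrite IHa1, IHa2. tauto.
  - apply (bounded_morphism_forall _ _ _ _ _ _ (mm_le _ _ _ Hf)); intros y.
    apply (bounded_morphism_forall _ _ _ _ _ _ (mm_RBp _ _ _ Hf)); intros y'.
    apply IHa.
  - apply (bounded_morphism_forall _ _ _ _ _ _ (mm_le _ _ _ Hf)); intros y.
    apply (bounded_morphism_exists _ _ _ _ _ _ (mm_RBm _ _ _ Hf)); intros y'.
    apply IHa.
  - apply (bounded_morphism_forall _ _ _ _ _ _ (mm_le _ _ _ Hf)); intros y.
    apply (bounded_morphism_exists _ _ _ _ _ _ (mm_RDp _ _ _ Hf)); intros y'.
    apply IHa.
  - apply (bounded_morphism_forall _ _ _ _ _ _ (mm_le _ _ _ Hf)); intros y.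
    apply (bounded_morphism_forall _ _ _ _ _ _ (mm_RDm _ _ _ Hf)); intros y'.
    apply IHa.
Qed.

Lemma supp_persistent (M : model) (a : form) : forall pol w w',
  le (mframe M) w w' -> supp M pol a w -> supp M pol a w'.
Proof.
  destruct (le_preorder (mframe M)) as [_ Htrans].
  induction a as [p|a IHa|a1 IHa1 a2 IHa2|a1 IHa1 a2 IHa2|a1 IHa1 a2 IHa2|a IHa|a IHa];
    intros pol w w' Hle; destruct pol; cbn [supp negb].
  - apply vpos_up; auto.
  - apply vneg_up; auto.
  - apply IHa; auto.
  - apply IHa; auto.
  - intros [? ?]; split; eauto.
  - intros [?|?]; [left|right]; eauto.
  - intros [?|?]; [left|right]; eauto.
  - intros [? ?]; split; eauto.
  - intros H v Hv. apply H. eapply Htrans; eauto.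
  - intros [? ?]; split; eauto.
  - intros H v Hv. apply H. eapply Htrans; eauto.
  - intros H v Hv. apply H. eapply Htrans; eauto.
  - intros H v Hv. apply H. eapply Htrans; eauto.
  - intros H v Hv. apply H. eapply Htrans; eauto.
Qed.

Section RootedSum.

(* [None] is the fresh root; [r] says whether it is related to every state. *)
Definition rooted_sum_rel {A B : Type} (r : Prop) (R1 : A -> A -> Prop)
  (R2 : B -> B -> Prop) (x y : option (A + B)) : Prop :=
  match x, y with
  | None, _ => r
  | Some (inl a), Some (inl b) => R1 a b
  | Some (inr a), Some (inr b) => R2 a b
  | _, _ => False
  end.

Lemma rooted_sum_rel_preorder {A B : Type} (R1 : A -> A -> Prop) (R2 : B -> B -> Prop) :
  preorder A R1 -> preorder B R2 -> preorder _ (rooted_sum_rel True R1 R2).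
Proof.
  intros [refl1 trans1] [refl2 trans2]. constructor.
  - intros [[a|a]|]; cbn; auto.
  - intros [[a|a]|] [[b|b]|] [[c|c]|]; cbn; intros; try tauto; eauto.
Qed.

Lemma rooted_sum_rel_same {A B : Type} r (R1 S1 : A -> A -> Prop) (R2 S2 : B -> B -> Prop) :
  same_rel R1 S1 -> same_rel R2 S2 -> same_rel (rooted_sum_rel r R1 R2) (rooted_sum_rel r S1 S2).
Proof.
  intros h1 h2 [[a|a]|] [[b|b]|]; cbn; try tauto; auto.
Qed.

Lemma bounded_morphism_inl {A B : Type} r (R1 : A -> A -> Prop) (R2 : B -> B -> Prop) :
  bounded_morphism R1 (rooted_sum_rel r R1 R2) (fun a => Some (inl a)).
Proof.
  split; [easy|].
  intros x [[y|y]|] H; cbn in H; [exists y; auto | contradiction ..].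
Qed.

Lemma bounded_morphism_inr {A B : Type} r (R1 : A -> A -> Prop) (R2 : B -> B -> Prop) :
  bounded_morphism R2 (rooted_sum_rel r R1 R2) (fun b => Some (inr b)).
Proof.
  split; [easy|].
  intros x [[y|y]|] H; cbn in H; [contradiction | exists y; auto | contradiction].
Qed.

Definition rooted_sum_frame (F1 F2 : frame) : frame :=
  {| W := option (W F1 + W F2);
     W_nonempty := inhabits None;
     le := rooted_sum_rel True (le F1) (le F2);
     le_preorder := rooted_sum_rel_preorder _ _ (le_preorder F1) (le_preorder F2);
     RBp := rooted_sum_rel False (RBp F1) (RBp F2);
     RBm := rooted_sum_rel False (RBm F1) (RBm F2);
     RDp := rooted_sum_rel False (RDp F1) (RDp F2);
     RDm := rooted_sum_rel False (RDm F1) (RDm F2) |}.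

Lemma in_class_rooted_sum (L : logic) (F1 F2 : frame) :
  in_class L F1 -> in_class L F2 -> in_class L (rooted_sum_frame F1 F2).
Proof.
  destruct L; cbn -[same_rel rooted_sum_rel]; intros;
    repeat match goal with H : _ /\ _ |- _ => destruct H end;
    repeat match goal with |- _ /\ _ => split end;
    solve [exact I | apply rooted_sum_rel_same; assumption].
Qed.

Variables M1 M2 : model.

Definition rooted_sum_val (v1 : Prop_var -> W (mframe M1) -> Prop)
  (v2 : Prop_var -> W (mframe M2) -> Prop) (p : Prop_var)
  (x : option (W (mframe M1) + W (mframe M2))) : Prop :=
  match x with
  | None => False
  | Some (inl a) => v1 p a
  | Some (inr b) => v2 p b
  end.

Lemma rooted_sum_val_up v1 v2 :
  (forall p w w', le (mframe M1) w w' -> v1 p w -> v1 p w') ->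
  (forall p w w', le (mframe M2) w w' -> v2 p w -> v2 p w') ->
  forall p (w w' : W (rooted_sum_frame (mframe M1) (mframe M2))),
    le (rooted_sum_frame (mframe M1) (mframe M2)) w w' ->
    rooted_sum_val v1 v2 p w -> rooted_sum_val v1 v2 p w'.
Proof.
  intros h1 h2 p [[a|a]|] [[b|b]|]; cbn; intros; try tauto; eauto.
Qed.

Definition rooted_sum : model :=
  {| mframe := rooted_sum_frame (mframe M1) (mframe M2);
     vpos := rooted_sum_val (vpos M1) (vpos M2);
     vneg := rooted_sum_val (vneg M1) (vneg M2);
     vpos_up := rooted_sum_val_up _ _ (vpos_up M1) (vpos_up M2);
     vneg_up := rooted_sum_val_up _ _ (vneg_up M1) (vneg_up M2) |}.

Lemma model_morphism_inl : model_morphism M1 rooted_sum (fun a => Some (inl a)).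
Proof.
  constructor; try apply bounded_morphism_inl; reflexivity.
Qed.

Lemma model_morphism_inr : model_morphism M2 rooted_sum (fun b => Some (inr b)).
Proof.
  constructor; try apply bounded_morphism_inr; reflexivity.
Qed.

End RootedSum.

Definition valid_pol (L : logic) (pol : bool) (a : form) : Prop :=
  forall M : model, in_class L (mframe M) -> forall w, supp M pol a w.

Lemma valid_pol_or_split (L : logic) (pol : bool) (phi chi : form) :
  (forall M : model, in_class L (mframe M) -> forall w,
      supp M pol phi w \/ supp M pol chi w) ->
  valid_pol L pol phi \/ valid_pol L pol chi.
Proof.
  intros H. apply NNPP. intros [Hphi Hchi]%not_or_and.
  apply not_all_ex_not in Hphi as [M1 [C1 [w1 H1]%not_all_ex_not]%imply_to_and].
  apply not_all_ex_not in Hchi as [M2 [C2 [w2 H2]%not_all_ex_not]%imply_to_and].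
  assert (Hroot : forall a w, supp (rooted_sum M1 M2) pol a None ->
                    supp (rooted_sum M1 M2) pol a w).
  { intros a w. apply supp_persistent. exact I. }
  destruct (H (rooted_sum M1 M2) (in_class_rooted_sum L _ _ C1 C2) None) as [Hs|Hs].
  - apply H1. apply (supp_model_morphism _ _ _ (model_morphism_inl M1 M2)), Hroot, Hs.
  - apply H2. apply (supp_model_morphism _ _ _ (model_morphism_inr M1 M2)), Hroot, Hs.
Qed.

Theorem theorem8 (L : logic) (phi chi : form) :
  (valid L (Or phi chi) <-> valid L phi \/ valid L chi) /\
  (valid L (Neg (And phi chi)) <-> valid L (Neg phi) \/ valid L (Neg chi)).
Proof.
  split; split.
  - apply (valid_pol_or_split L true).
  - intros [H|H] M C w; cbn; [left|right]; apply H, C.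
  - apply (valid_pol_or_split L false).
  - intros [H|H] M C w; cbn; [left|right]; apply H, C.
Qed.
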